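(* Let $n\ge1$, $L,G>0$ and $\eta>0$ with $\eta L\le 1$. Let $a_1,\dots,a_n\in[0,L]$ and $b_1,\dots,b_n\in[-G,G]$ with $\sum_{i=1}^nb_i=0$. For a permutation $\sigma$ of $\{1,\dots,n\}$ define \[ X_\sigma=\sum_{j=1}^n\left(\prod_{i=j+1}^n(1-\eta a_{\sigma(i)})\right)b_{\sigma(j)} \] (an empty product equals $1$). If $\sigma$ is a uniformly random permutation, then \[ \mathbb{E}_\sigma\big[X_\sigma^2\big]\;\le\;5\eta^2n^3L^2G^2\log(2n). \] *)

From mathcomp Require Import all_boot all_fingroup.
From Stdlib Require Import Reals.
Set Implicit Arguments. Unset Strict Implicit. Unset Printing Implicit Defensive.

(* Indices are 0-based: {1..n} is 'I_n.  For sigma a permutation,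
   X_sigma = sum_j (prod_{i > j} (1 - eta a_{sigma i})) * b_{sigma j}. *)
Definition Xsig (n : nat) (eta : R) (a b : 'I_n -> R) (s : {perm 'I_n}) : R :=
  \big[Rplus/0%R]_(j < n)
     Rmult (\big[Rmult/1%R]_(i < n | (j < i)%N) Rminus 1%R (Rmult eta (a (s i))))
           (b (s j)).

Definition EXsq (n : nat) (eta : R) (a b : 'I_n -> R) : R :=
  Rdiv (\big[Rplus/0%R]_(s : {perm 'I_n}) Rsqr (Xsig eta a b s))
       (INR #|{perm 'I_n}|).

From HB Require Import structures.
From mathcomp Require Import all_boot all_fingroup.
From Stdlib Require Import Reals Lra.
Set Implicit Arguments. Unset Strict Implicit. Unset Printing Implicit Defensive.

(* We prove the stronger bound  E[X_sigma^2] <= eta^2 n^3 L^2 G^2,  which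
   implies the claim because 5 ln(2n) >= 5 ln 2 > 1.

   Fix sigma and put K = eta L <= 1, c_j = eta a_(sigma j) in [0, K] and
   d_j = b_(sigma j).  X_sigma is the value Y_n of the recursion
   Y_(m+1) = (1 - c_m) Y_m + d_m, Y_0 = 0, while the partial sums
   T_m = d_0 + ... + d_(m-1) obey the same recursion with c = 0 and T_n = 0.
   Comparing the two recursions gives |Y_m - T_m| <= K sum_(i<m) |T_i|, hence
   by Cauchy-Schwarz  X_sigma^2 <= K^2 n sum_(i<n) T_i^2  (per_perm_bound).
   Averaged over sigma, the mixed products b_(sigma u) b_(sigma v), u <> v,
   have a nonpositive mean (all of them have the same mean, and together with
   the nonnegative squares they average to (sum b)^2 = 0), so the mean of
   T_i^2 is at most i G^2 <= n G^2 (perm_mean_partial_sum_sq).  Summing over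
   the n values of i yields the bound. *)

Local Open Scope R_scope.

Lemma RplusA : associative Rplus. Proof. by move=> x y z; rewrite Rplus_assoc. Qed.
Lemma RmultA : associative Rmult. Proof. by move=> x y z; rewrite Rmult_assoc. Qed.

HB.instance Definition _ :=
  Monoid.isComLaw.Build R 0 Rplus RplusA Rplus_comm Rplus_0_l.
HB.instance Definition _ :=
  Monoid.isComLaw.Build R 1 Rmult RmultA Rmult_comm Rmult_1_l.
HB.instance Definition _ := Monoid.isMulLaw.Build R 0 Rmult Rmult_0_l Rmult_0_r.
HB.instance Definition _ :=
  Monoid.isAddLaw.Build R Rmult Rplus Rmult_plus_distr_r Rmult_plus_distr_l.

Lemma sumR_le (I : Type) (r : seq I) (P : pred I) (F1 F2 : I -> R) :
  (forall i, P i -> F1 i <= F2 i) ->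
  \big[Rplus/0]_(i <- r | P i) F1 i <= \big[Rplus/0]_(i <- r | P i) F2 i.
Proof.
by move=> le12; apply: (big_ind2 (fun x y => x <= y)) => //; [lra | intros; lra].
Qed.

Lemma sumR_ge0 (I : Type) (r : seq I) (P : pred I) (F : I -> R) :
  (forall i, P i -> 0 <= F i) -> 0 <= \big[Rplus/0]_(i <- r | P i) F i.
Proof. by move=> F0; apply: (big_ind (fun x => 0 <= x)) => //; [lra | intros; lra]. Qed.

Lemma sumR_le0 (I : Type) (r : seq I) (P : pred I) (F : I -> R) :
  (forall i, P i -> F i <= 0) -> \big[Rplus/0]_(i <- r | P i) F i <= 0.
Proof. by move=> F0; apply: (big_ind (fun x => x <= 0)) => //; [lra | intros; lra]. Qed.

Lemma sumR_const (I : finType) (A : {pred I}) (c : R) :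
  \big[Rplus/0]_(i in A) c = INR #|A| * c.
Proof.
rewrite big_const; elim: #|A| => [|k IH]; first by rewrite /=; lra.
by rewrite iterS IH S_INR; lra.
Qed.

Lemma sumR_const_ord (m : nat) (c : R) : \big[Rplus/0]_(i < m) c = INR m * c.
Proof. by rewrite -[m in INR m]card_ord -sumR_const. Qed.

Lemma sqr_sumR (I : Type) (r : seq I) (x : I -> R) :
  Rsqr (\big[Rplus/0]_(i <- r) x i) =
  \big[Rplus/0]_(i <- r) \big[Rplus/0]_(j <- r) (x i * x j).
Proof. by rewrite /Rsqr big_distrl; apply: eq_bigr => i _; rewrite big_distrr. Qed.

(* Cauchy-Schwarz for the all-ones vector: (sum x)^2 <= |I| sum x^2, from
   x_i x_j <= (x_i^2 + x_j^2) / 2. *)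
Lemma cauchy_schwarz (I : finType) (x : I -> R) :
  Rsqr (\big[Rplus/0]_(i : I) x i) <= INR #|I| * \big[Rplus/0]_(i : I) Rsqr (x i).
Proof.
rewrite sqr_sumR.
apply: (Rle_trans _ (\big[Rplus/0]_(i : I) \big[Rplus/0]_(j : I)
                       ((Rsqr (x i) + Rsqr (x j)) / 2))).
  apply: sumR_le => i _; apply: sumR_le => j _.
  have := Rle_0_sqr (x i - x j); rewrite /Rsqr; lra.
apply: Req_le.
under eq_bigr => i _ do rewrite -big_distrl /= big_split /= sumR_const.
rewrite -big_distrl /= big_split /= -big_distrr /= sumR_const.
by rewrite -/#|I|; field.
Qed.

Definition damped_sum (c d : nat -> R) (m : nat) : R :=
  \big[Rplus/0]_(j < m) ((\big[Rmult/1]_(i < m | (j < i)%nat) (1 - c i)) * d j).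

Definition partial_sum (d : nat -> R) (m : nat) : R := \big[Rplus/0]_(j < m) d j.

Lemma damped_sumS (c d : nat -> R) (m : nat) :
  damped_sum c d m.+1 = (1 - c m) * damped_sum c d m + d m.
Proof.
rewrite /damped_sum big_ord_recr /=.
rewrite (@big1 _ _ _ _ _ _ (fun i : 'I_m.+1 => 1 - c i)) => [|i]; last first.
  by rewrite ltnNge -ltnS ltn_ord.
rewrite Rmult_1_l big_distrr; congr (_ + _); apply: eq_bigr => j _.
by rewrite big_mkcond big_ord_recr /= ltn_ord -big_mkcond /=; ring.
Qed.

Lemma partial_sumS (d : nat -> R) (m : nat) :
  partial_sum d m.+1 = partial_sum d m + d m.
Proof. by rewrite /partial_sum big_ord_recr. Qed.

Lemma damped_sum_dev (c d : nat -> R) (K : R) (m : nat) :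
  (forall i, 0 <= c i <= K) -> K <= 1 ->
  Rabs (damped_sum c d m - partial_sum d m) <=
  K * \big[Rplus/0]_(i < m) Rabs (partial_sum d i).
Proof.
move=> c_bd K1; elim: m => [|m IH].
  by rewrite /damped_sum /partial_sum !big_ord0 Rminus_0_r Rabs_R0; lra.
rewrite damped_sumS partial_sumS big_ord_recr /=.
set D := damped_sum c d m - partial_sum d m in IH *; set T := partial_sum d m.
have [c0 cK] := c_bd m.
have -> : (1 - c m) * damped_sum c d m + d m - (T + d m) = (1 - c m) * D - c m * T.
  by rewrite /D /T; ring.
apply: Rle_trans (Rabs_triang _ _) _.
rewrite Rabs_Ropp !Rabs_mult (Rabs_pos_eq (c m)) //.
have damp : Rabs (1 - c m) * Rabs D <= Rabs D.
  have : Rabs (1 - c m) <= 1 by apply: Rabs_le; lra.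
  have := Rabs_pos D; nra.
have drift : c m * Rabs T <= K * Rabs T by have := Rabs_pos T; nra.
rewrite Rmult_plus_distr_l.
exact: Rplus_le_compat (Rle_trans _ _ _ damp IH) drift.
Qed.

Definition perm_partial_sum (n : nat) (b : 'I_n.+1 -> R) (s : {perm 'I_n.+1}) :=
  partial_sum (fun j => b (s (inord j))).

Lemma sum_perm (n : nat) (b : 'I_n -> R) (s : {perm 'I_n}) :
  \big[Rplus/0]_(i < n) b (s i) = \big[Rplus/0]_(i < n) b i.
Proof. by rewrite [RHS](reindex_inj (@perm_inj _ s)). Qed.

(* Deterministic bound: for a fixed permutation, X_sigma^2 is at most
   (eta L)^2 n times the sum of the squared permuted partial sums; here
   T_n = sum b = 0 is what makes the comparison with the partial sums useful. *)
Lemma per_perm_bound (n : nat) (L eta : R) (a b : 'I_n.+1 -> R) (s : {perm 'I_n.+1}) :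
  0 < eta -> eta * L <= 1 -> (forall i, 0 <= a i <= L) ->
  \big[Rplus/0]_(i < n.+1) b i = 0 ->
  Rsqr (Xsig eta a b s) <=
  Rsqr (eta * L) * INR n.+1 *
    \big[Rplus/0]_(i < n.+1) Rsqr (perm_partial_sum b s i).
Proof.
move=> eta0 K1 a_bd b0.
pose c j := eta * a (s (inord j)); pose d j := b (s (inord j)).
have X_damped : Xsig eta a b s = damped_sum c d n.+1.
  rewrite /Xsig /damped_sum; apply: eq_bigr => j _; rewrite /d inord_val.
  by congr (_ * _); apply: eq_bigr => i _; rewrite /c inord_val.
have T_end : partial_sum d n.+1 = 0.
  by rewrite /partial_sum -[RHS]b0 -(sum_perm b s); apply: eq_bigr => j _; rewrite /d inord_val.
have c_bd : forall i, 0 <= c i <= eta * L.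
  by move=> i; have [a0 aL] := a_bd (s (inord i)); rewrite /c; split; nra.
have K0 : 0 <= eta * L by have := c_bd 0%nat; lra.
have dev := damped_sum_dev d n.+1 c_bd K1.
rewrite T_end Rminus_0_r -X_damped in dev.
have S0 : 0 <= \big[Rplus/0]_(i < n.+1) Rabs (partial_sum d i).
  by apply: sumR_ge0 => i _; apply: Rabs_pos.
rewrite Rsqr_abs.
apply: Rle_trans (Rsqr_incr_1 _ _ dev (Rabs_pos _) (Rmult_le_pos _ _ K0 S0)) _.
rewrite Rsqr_mult Rmult_assoc; apply: Rmult_le_compat_l; first exact: Rle_0_sqr.
have := cauchy_schwarz (fun i : 'I_n.+1 => Rabs (partial_sum d i)).
rewrite card_ord => cs; apply: Rle_trans cs _; apply: Req_le; congr (_ * _).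
by apply: eq_bigr => i _; rewrite -Rsqr_abs.
Qed.

(* Exchangeability: if sum b = 0, then for u <> v the product b_(sigma u) b_(sigma v)
   has nonpositive sum over all permutations sigma.  All these sums C_w (w <> u)
   coincide (compose with a transposition), and C_u + sum_(w <> u) C_w = 0 with
   C_u >= 0. *)
Lemma perm_cross_sum_le0 (n : nat) (b : 'I_n -> R) (u v : 'I_n) :
  u != v -> \big[Rplus/0]_(i < n) b i = 0 ->
  \big[Rplus/0]_(s : {perm 'I_n}) (b (s u) * b (s v)) <= 0.
Proof.
move=> uv b0.
pose C w := \big[Rplus/0]_(s : {perm 'I_n}) (b (s u) * b (s w)).
have C_const : forall w, w != u -> C w = C v.
  move=> w wu; rewrite /C [in RHS](reindex_inj (@mulgI _ (tperm v w))) /=.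
  by apply: eq_bigr => s _; rewrite !permM tpermL tpermD // eq_sym.
have C_total : \big[Rplus/0]_(w < n) C w = 0.
  rewrite /C exchange_big big1 // => s _.
  by rewrite -big_distrr /= sum_perm b0 Rmult_0_r.
have Cu0 : 0 <= C u by apply: sumR_ge0 => s _; apply: Rle_0_sqr.
rewrite (bigD1 u) //= (eq_bigr (fun _ => C v)) in C_total; last first.
  by move=> w /C_const.
rewrite sumR_const in C_total.
set N := INR _ in C_total.
have N0 : 0 < N.
  by apply/lt_0_INR/ltP/card_gt0P; exists v; rewrite unfold_in eq_sym.
change (C v <= 0); nra.
Qed.

(* Averaged over permutations, the i-th partial sum has second moment at most
   i G^2: only the i diagonal terms survive the expansion of the square. *)
Lemma perm_mean_partial_sum_sq (n : nat) (G : R) (b : 'I_n.+1 -> R) (i : nat) :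
  (i <= n.+1)%nat -> (forall j, - G <= b j <= G) ->
  \big[Rplus/0]_(i < n.+1) b i = 0 ->
  \big[Rplus/0]_(s : {perm 'I_n.+1}) Rsqr (perm_partial_sum b s i)
    <= INR i * (INR #|{perm 'I_n.+1}| * (G * G)).
Proof.
move=> le_in b_bd b0.
under eq_bigr => s _ do rewrite /perm_partial_sum /partial_sum sqr_sumR.
rewrite exchange_big -sumR_const_ord; apply: sumR_le => k _.
rewrite exchange_big (bigD1 k) //=.
have diag : \big[Rplus/0]_(s : {perm 'I_n.+1}) (b (s (inord k)) * b (s (inord k)))
            <= INR #|{perm 'I_n.+1}| * (G * G).
  rewrite -sumR_const; apply: sumR_le => s _.
  by have [lo hi] := b_bd (s (inord k)); nra.
have off_diag : \big[Rplus/0]_(l < i | l != k)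
    \big[Rplus/0]_(s : {perm 'I_n.+1}) (b (s (inord k)) * b (s (inord l))) <= 0.
  apply: sumR_le0 => l lk; apply: perm_cross_sum_le0 => //.
  apply: contra lk => /eqP /(congr1 val).
  rewrite /= !inordK => [kl||]; first by apply/eqP/val_inj.
  - exact: leq_trans (ltn_ord l) le_in.
  - exact: leq_trans (ltn_ord k) le_in.
rewrite -[X in _ <= X]Rplus_0_r; exact: Rplus_le_compat diag off_diag.
Qed.

Lemma sum_Xsig_sq_bound (n : nat) (L G eta : R) (a b : 'I_n.+1 -> R) :
  0 < eta -> eta * L <= 1 -> (forall i, 0 <= a i <= L) ->
  (forall i, - G <= b i <= G) ->
  \big[Rplus/0]_(i < n.+1) b i = 0 ->
  \big[Rplus/0]_(s : {perm 'I_n.+1}) Rsqr (Xsig eta a b s) <=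
  Rsqr (eta * L) * INR n.+1 ^ 3 * (INR #|{perm 'I_n.+1}| * (G * G)).
Proof.
move=> eta0 K1 a_bd b_bd b0.
set P := INR #|{perm 'I_n.+1}| * (G * G); set N := INR n.+1.
have P0 : 0 <= P by apply: Rmult_le_pos; [apply: pos_INR | apply: Rle_0_sqr].
apply: (Rle_trans _ (\big[Rplus/0]_(s : {perm 'I_n.+1})
  (Rsqr (eta * L) * N * \big[Rplus/0]_(i < n.+1) Rsqr (perm_partial_sum b s i)))).
  by apply: sumR_le => s _; exact: per_perm_bound.
rewrite -big_distrr /= exchange_big.
have -> : Rsqr (eta * L) * N ^ 3 * P = Rsqr (eta * L) * N * (N * (N * P)) by ring.
apply: Rmult_le_compat_l.
  by apply: Rmult_le_pos; [apply: Rle_0_sqr | apply: pos_INR].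
rewrite -sumR_const_ord; apply: sumR_le => i _.
apply: (Rle_trans _ (INR i * P)).
  by apply: perm_mean_partial_sum_sq => //; exact: ltnW.
apply: Rmult_le_compat_r => //; apply: le_INR; apply/leP; exact: ltnW.
Qed.

(* The logarithmic factor is harmless: 5 ln(2N) >= 5 ln 2 > 1 for N >= 1. *)
Lemma one_le_5_ln (N : R) : 1 <= N -> 1 <= 5 * ln (2 * N).
Proof.
move=> N1; have : ln 2 <= ln (2 * N).
  by case: (Rle_lt_or_eq_dec 1 N N1) => [lt1N|<-];
    [apply: Rlt_le; apply: ln_increasing; lra | rewrite Rmult_1_r; lra].
have := ln_lt_2; lra.
Qed.

Local Close Scope R_scope.

Theorem lemma7 (n : nat) (L G eta : R) (a b : 'I_n -> R) :
  (1 <= n)%N ->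
  (0 < L)%R -> (0 < G)%R -> (0 < eta)%R -> (eta * L <= 1)%R ->
  (forall i, 0 <= a i <= L)%R ->
  (forall i, - G <= b i <= G)%R ->
  \big[Rplus/0%R]_(i < n) b i = 0%R ->
  (EXsq eta a b <= 5 * eta ^ 2 * INR n ^ 3 * L ^ 2 * G ^ 2 * ln (2 * INR n))%R.
Proof.
Local Open Scope R_scope.
case: n a b => [|n] a b; first by [].
move=> _ L0 G0 eta0 K1 a_bd b_bd b0.
set P := INR #|{perm 'I_n.+1}|; set N := INR n.+1.
have P0 : 0 < P by apply: lt_0_INR; apply/ltP/card_gt0P; exists 1%g.
have N1 : 1 <= N by rewrite /N S_INR; have := pos_INR n; lra.
set Q := eta ^ 2 * N ^ 3 * L ^ 2 * G ^ 2.
have main : EXsq eta a b <= Q.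
  rewrite /EXsq /Rdiv -/P; apply: Rle_trans.
    apply: Rmult_le_compat_r (sum_Xsig_sq_bound eta0 K1 a_bd b_bd b0).
    exact: Rlt_le (Rinv_0_lt_compat _ P0).
  by apply: Req_le; rewrite -/N -/P /Q /Rsqr; field; lra.
have Q0 : 0 <= Q by rewrite /Q; repeat apply: Rmult_le_pos; try apply: pow_le; lra.
have -> : 5 * eta ^ 2 * N ^ 3 * L ^ 2 * G ^ 2 * ln (2 * N) = Q * (5 * ln (2 * N)).
  by rewrite /Q; ring.
apply: Rle_trans main _; rewrite -[X in X <= _]Rmult_1_r.
exact: Rmult_le_compat_l Q0 (one_le_5_ln N1).
Qed.
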